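(* Let $1\ge a>0$. (a) The memory-one strategy $\mathbf p=a\,(1,0,1,0)+(1-a)(1,1,0,0)$ (a mixture of Tit-for-Tat and Repeat) is good, and for every strategy pattern of Y and every associated limit distribution the expected payoffs satisfy $s_Y=s_X$. (b) The memory-one strategy $\mathbf p=a\,(1,0,0,0)+(1-a)(1,1,0,0)$ (a mixture of Grim and Repeat) is good.
   Context: Iterated Prisoner's Dilemma: payoffs $T>R>P>S$ with $2R>T+S$; outcomes of a round are ordered $cc,cd,dc,dd$ (first letter X's play, second Y's; $c$ = cooperate, $d$ = defect); payoff vectors $\mathbf S_X=(R,S,T,P)$, $\mathbf S_Y=(R,T,S,P)$. A memory-one strategy for X is $\mathbf p=(p_1,p_2,p_3,p_4)\in[0,1]^4$, where $p_i$ is the probability that X plays $c$ in the next round given that the current round had the $i$-th outcome. A strategy pattern for Y is an arbitrary (possibly randomized and history-dependent) rule for Y's play in each round. Given initial plays and the rules used, let $\mathbf v^n$ be the probability distribution of the outcome of round $n$; a limit distribution is any limit point $\mathbf v$ of the Cesàro averages $\frac1n\sum_{k=1}^n\mathbf v^k$, and the associated expected payoffs are $s_X=\langle\mathbf v\cdot\mathbf S_X\rangle$, $s_Y=\langle\mathbf v\cdot\mathbf S_Y\rangle$. $\mathbf p$ is agreeable if $p_1=1$. $\mathbf p$ is good if it is agreeable and, for every strategy pattern of Y and every associated limit distribution, $s_Y\ge R$ implies $s_Y=s_X=R$. *)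

From HB Require Import structures.
From mathcomp Require Import all_boot all_order all_algebra.
From mathcomp Require Import reals.
Set Implicit Arguments. Unset Strict Implicit. Unset Printing Implicit Defensive.
Import Order.TTheory GRing.Theory Num.Theory.
Local Open Scope ring_scope.

(* An outcome of a round: (X cooperates?, Y cooperates?).
   The paper's ordering cc, cd, dc, dd corresponds to
   (true,true), (true,false), (false,true), (false,false). *)
Definition outcome := (bool * bool)%type.

Section IPD.
Variable R : realType.

Definition vec4 (x1 x2 x3 x4 : R) (o : outcome) : R :=
  match o with
  | (true, true) => x1
  | (true, false) => x2
  | (false, true) => x3
  | (false, false) => x4
  end.

Definition mix (a : R) (u v : outcome -> R) (o : outcome) : R :=
  a * u o + (1 - a) * v o.

Definition TFT : outcome -> R := vec4 1 0 1 0.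
Definition Repeat : outcome -> R := vec4 1 1 0 0.
Definition Grim : outcome -> R := vec4 1 0 0 0.

Definition PD (pT pR pP pS : R) : Prop :=
  [/\ pT > pR, pR > pP, pP > pS & 2 * pR > pT + pS].

Definition SX (pT pR pP pS : R) : outcome -> R := vec4 pR pS pT pP.
Definition SY (pT pR pP pS : R) : outcome -> R := vec4 pR pT pS pP.

(* A memory-one strategy p for X (p o = prob. X cooperates next round
   given the current outcome o). *)
Definition mem1 (p : outcome -> R) : Prop := forall o, 0 <= p o <= 1.

(* A strategy pattern for Y: a (behaviour) rule giving, for each history of
   previous outcomes, the probability that Y cooperates in the next round. *)
Definition ystrat (ys : seq outcome -> R) : Prop := forall h, 0 <= ys h <= 1.

Definition bern (q : R) (b : bool) : R := if b then q else 1 - q.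

Definition probX (p : outcome -> R) (x0 : R) (h : seq outcome) : R :=
  if h is _ :: _ then p (last (true, true) h) else x0.

Definition step (p : outcome -> R) (x0 : R) (ys : seq outcome -> R)
  (h : seq outcome) (o : outcome) : R :=
  bern (probX p x0 h) o.1 * bern (ys h) o.2.

Definition histprob p x0 ys (h : seq outcome) : R :=
  \prod_(i < size h) step p x0 ys (take i h) (nth (true, true) h i).

(* v^(n+1): distribution of the outcome of round n+1 *)
Definition vdist p x0 ys (n : nat) (o : outcome) : R :=
  \sum_(t : n.-tuple outcome) histprob p x0 ys (rcons t o).

Definition cesaro p x0 ys (n : nat) (o : outcome) : R :=
  (\sum_(k < n) vdist p x0 ys k o) / n%:R.

Definition limit_dist p x0 ys (v : outcome -> R) : Prop :=
  forall eps : R, 0 < eps -> forall N : nat, exists n : nat,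
    (N <= n)%N /\ (0 < n)%N /\
    forall o : outcome, `|cesaro p x0 ys n o - v o| < eps.

Definition payoff (S : outcome -> R) (v : outcome -> R) : R :=
  \sum_(o : outcome) v o * S o.

Definition agreeable (p : outcome -> R) : Prop := p (true, true) = 1.

Definition good (pT pR pP pS : R) (p : outcome -> R) : Prop :=
  agreeable p /\
  forall (x0 : R) (ys : seq outcome -> R) (v : outcome -> R),
    0 <= x0 <= 1 -> ystrat ys -> limit_dist p x0 ys v ->
    payoff (SY pT pR pP pS) v >= pR ->
    payoff (SY pT pR pP pS) v = pR /\ payoff (SX pT pR pP pS) v = pR.

End IPD.

(* Against X's memory-one strategy p, Akin's lemma says that every limit
   distribution v of play satisfies <v, p - Repeat> = 0: the expected value
   of p - Repeat over the first n rounds telescopes into the difference of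
   the probabilities that X cooperates in round n+1 and in round 1, which is
   bounded, so its Cesaro average tends to 0.  For the TFT/Repeat mixture
   p - Repeat = a (0,-1,1,0), hence v_cd = v_dc and the payoffs agree; then
   s_Y <= R because P < R and T + S < 2R.  For the Grim/Repeat mixture
   p - Repeat = a (0,-1,0,0), hence v_cd = 0, and s_Y >= R forces
   v_dc = v_dd = 0 because S, P < R. *)

From HB Require Import structures.
From mathcomp Require Import all_boot all_order all_algebra.
From mathcomp Require Import reals.
From mathcomp Require Import ring lra.
Set Implicit Arguments. Unset Strict Implicit.
Import Order.TTheory GRing.Theory Num.Theory.
Local Open Scope ring_scope.

Lemma big_outcome (R : realType) (F : outcome -> R) :
  \sum_o F o = F (true, true) + F (true, false) + F (false, true) + F (false, false).
Proof.
transitivity (\sum_(i : bool) \sum_(j : bool) F (i, j)).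
  by rewrite pair_bigA; apply: eq_bigr => -[].
by rewrite !big_bool /= !addrA.
Qed.

Lemma big_tuple_rcons (R : realType) n (F : seq outcome -> R) :
  \sum_(t : n.+1.-tuple outcome) F t =
  \sum_(t : n.-tuple outcome) \sum_o F (rcons t o).
Proof.
rewrite pair_big /=.
rewrite (reindex (fun u : n.+1.-tuple outcome =>
   ([tuple of belast (thead u) (behead u)], last (thead u) (behead u)))) /=.
  by apply: eq_bigr => -[[|x s] Hs] _ //=; rewrite -lastI.
exists (fun q : n.-tuple outcome * outcome => [tuple of rcons q.1 q.2]).
  by move=> [[|x s] Hs] _ //; apply: val_inj => /=; rewrite -lastI.
move=> [[[|x s] Hs] o] _; congr pair; try apply: val_inj => //=.
  by rewrite belast_rcons.
by rewrite last_rcons.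
Qed.

Section Play.
Variables (R : realType) (p : outcome -> R) (x0 : R) (ys : seq outcome -> R).

Lemma histprob_rcons h o :
  histprob p x0 ys (rcons h o) = histprob p x0 ys h * step p x0 ys h o.
Proof.
rewrite /histprob size_rcons big_ord_recr /= -cats1 take_size_cat //.
rewrite nth_cat ltnn subnn; congr (_ * _); apply: eq_bigr => i _.
by rewrite takel_cat ?(ltnW (ltn_ord i)) // nth_cat ltn_ord.
Qed.

Lemma sum_step h : \sum_o step p x0 ys h o = 1.
Proof. by rewrite big_outcome /step /=; ring. Qed.

Lemma sum_step_Repeat h : \sum_o step p x0 ys h o * Repeat R o = probX p x0 h.
Proof. by rewrite big_outcome /step /Repeat /=; ring. Qed.

Lemma sum_histprob n : \sum_(t : n.-tuple outcome) histprob p x0 ys t = 1.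
Proof.
elim: n => [|n IH].
  rewrite (big_pred1 [tuple]) => [|t]; first by rewrite /histprob big_ord0.
  by apply/esym/eqP/val_inj; case: t => -[].
rewrite big_tuple_rcons -{}IH; apply: eq_bigr => t _.
by rewrite -[RHS]mulr1 -(sum_step t) mulr_sumr; apply: eq_bigr => o _; rewrite histprob_rcons.
Qed.

Lemma vdistE n o :
  vdist p x0 ys n o = \sum_(t : n.-tuple outcome) histprob p x0 ys t * step p x0 ys t o.
Proof. by apply: eq_bigr => t _; rewrite histprob_rcons. Qed.

Lemma sum_vdist n : \sum_o vdist p x0 ys n o = 1.
Proof.
under eq_bigr do rewrite vdistE.
rewrite exchange_big /= -(sum_histprob n); apply: eq_bigr => t _.
by rewrite -mulr_sumr sum_step mulr1.
Qed.

Definition coopX n := \sum_(t : n.-tuple outcome) histprob p x0 ys t * probX p x0 t.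

Lemma vdist_Repeat n : \sum_o vdist p x0 ys n o * Repeat R o = coopX n.
Proof.
under eq_bigr do rewrite vdistE mulr_suml.
rewrite exchange_big /=; apply: eq_bigr => t _.
by rewrite -(sum_step_Repeat t) mulr_sumr; apply: eq_bigr => o _; rewrite mulrA.
Qed.

Lemma vdist_strategy n : \sum_o vdist p x0 ys n o * p o = coopX n.+1.
Proof.
rewrite /coopX (big_tuple_rcons n (fun s => histprob p x0 ys s * probX p x0 s)).
under eq_bigr do rewrite /vdist mulr_suml.
rewrite exchange_big /=; apply: eq_bigr => -[[|x s] Hs] _; apply: eq_bigr => o _ //=.
by rewrite -cats1 last_cat.
Qed.

Lemma cesaro_strategy_sub_Repeat n :
  \sum_o cesaro p x0 ys n o * (p o - Repeat R o) = (coopX n - coopX 0) / n%:R.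
Proof.
rewrite /cesaro; under eq_bigr do rewrite mulrAC.
rewrite -mulr_suml; congr (_ / _).
under eq_bigr do rewrite mulr_suml.
rewrite exchange_big /=.
under eq_bigr => k _ do under eq_bigr do rewrite mulrBr.
under eq_bigr do rewrite sumrB vdist_strategy vdist_Repeat.
by rewrite -(big_mkord xpredT (fun k => coopX k.+1 - coopX k)) telescope_sumr.
Qed.

Lemma sum_cesaro n : (0 < n)%N -> \sum_o cesaro p x0 ys n o = 1.
Proof.
move=> n_gt0; rewrite /cesaro -mulr_suml exchange_big /=.
under eq_bigr do rewrite sum_vdist.
by rewrite sumr_const card_ord divff // pnatr_eq0 -lt0n.
Qed.

Lemma bern_ge0 (q : R) b : 0 <= q <= 1 -> 0 <= bern q b.
Proof. by case/andP=> ? ?; case: b; rewrite /= ?subr_ge0. Qed.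

Hypotheses (hp : mem1 p) (hx0 : 0 <= x0 <= 1) (hys : ystrat ys).

Lemma probX_in01 h : 0 <= probX p x0 h <= 1.
Proof. by case: h => //= *; apply: hp. Qed.

Lemma histprob_ge0 h : 0 <= histprob p x0 ys h.
Proof. by apply: prodr_ge0 => i _; rewrite mulr_ge0 ?bern_ge0 ?probX_in01. Qed.

Lemma coopX_in01 n : 0 <= coopX n <= 1.
Proof.
apply/andP; split.
  by apply: sumr_ge0 => t _; rewrite mulr_ge0 ?histprob_ge0 //; case/andP: (probX_in01 t).
rewrite -(sum_histprob n); apply: ler_sum => t _.
by rewrite ler_piMr ?histprob_ge0 //; case/andP: (probX_in01 t).
Qed.

Lemma cesaro_ge0 n o : 0 <= cesaro p x0 ys n o.
Proof.
rewrite /cesaro divr_ge0 // sumr_ge0 // => k _.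
by apply: sumr_ge0 => t _; apply: histprob_ge0.
Qed.

End Play.

Section LimitDistribution.
Variables (R : realType) (p : outcome -> R) (x0 : R) (ys : seq outcome -> R).
Variable v : outcome -> R.
Hypothesis hv : limit_dist p x0 ys v.

Lemma limit_dist_dot_near (c : outcome -> R) e N : 0 < e -> exists n, [/\ (N <= n)%N,
  (0 < n)%N & `|\sum_o cesaro p x0 ys n o * c o - \sum_o v o * c o| <= e].
Proof.
move=> e_gt0; set s := \sum_o `|c o|.
have s1_gt0 : 0 < 1 + s by rewrite ltr_pwDl // sumr_ge0.
have [n [Nn [n_gt0 close]]] := hv (divr_gt0 e_gt0 s1_gt0) N.
exists n; split => //; rewrite -sumrB.
apply: le_trans (ler_norm_sum _ _ _) _.
apply: (@le_trans _ _ (\sum_o e / (1 + s) * `|c o|)).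
  by apply: ler_sum => o _; rewrite -mulrBl normrM ler_wpM2r // ltW.
rewrite -mulr_sumr -/s mulrAC ler_pdivrMr // ler_wpM2l ?ltW //; lra.
Qed.

Lemma limit_dist_dot (c : outcome -> R) (L B : R) : 0 <= B ->
  (forall n, (0 < n)%N -> `|\sum_o cesaro p x0 ys n o * c o - L| <= B / n%:R) ->
  \sum_o v o * c o = L.
Proof.
move=> B_ge0 rate; apply/eqP; rewrite -subr_eq0 -normr_le0; apply/ler_addgt0Pr => e e_gt0.
rewrite add0r; set M := B * 2 / e.
have M_ge0 : 0 <= M by rewrite divr_ge0 ?mulr_ge0 // ltW.
have [n [Mn n_gt0 close]] := limit_dist_dot_near c (Num.bound M) (divr_gt0 e_gt0 (ltr0Sn R 1)).
have B_small : B / n%:R <= e / 2.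
  have : M < n%:R by apply: lt_le_trans (archi_boundP M_ge0) _; rewrite ler_nat.
  by rewrite ltr_pdivrMr // ler_pdivrMr ?ltr0n // => ?; lra.
have := rate n n_gt0; move: close.
move: (\sum_o v o * c o) (\sum_o cesaro _ _ _ _ _ * _) => X Y h1 h2.
have := ler_distD Y X L; rewrite distrC in h1; lra.
Qed.

Lemma sum_limit_dist : \sum_o v o = 1.
Proof.
under eq_bigr do rewrite -[v _]mulr1.
apply: (limit_dist_dot (B := 0)) => // n n_gt0.
by rewrite mul0r (eq_bigr _ (fun o _ => mulr1 _)) sum_cesaro // subrr normr0.
Qed.

Hypotheses (hp : mem1 p) (hx0 : 0 <= x0 <= 1) (hys : ystrat ys).

Lemma limit_dist_ge0 o : 0 <= v o.
Proof.
apply/ler_addgt0Pr => e e_gt0.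
have [n [_ [_ close]]] := hv e_gt0 0%N.
have := close o; have := cesaro_ge0 hp hx0 hys n o.
have := ler_norm (cesaro p x0 ys n o - v o); lra.
Qed.

Lemma Akin : \sum_o v o * (p o - Repeat R o) = 0.
Proof.
apply: (limit_dist_dot (B := 1)) => // n n_gt0.
rewrite cesaro_strategy_sub_Repeat subr0 normrM normfV normr_nat ler_wpM2r ?invr_ge0 //.
have /andP[? ?] := coopX_in01 hp hx0 hys n; have /andP[? ?] := coopX_in01 hp hx0 hys 0.
by rewrite ler_norml; apply/andP; split; lra.
Qed.

End LimitDistribution.

Lemma mem1_vec4 (R : realType) (x1 x2 x3 x4 : R) :
  0 <= x1 <= 1 -> 0 <= x2 <= 1 -> 0 <= x3 <= 1 -> 0 <= x4 <= 1 -> mem1 (vec4 x1 x2 x3 x4).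
Proof. by move=> *; case=> [[] []]. Qed.

Lemma mem1_mix (R : realType) (a : R) u w :
  0 <= a <= 1 -> mem1 u -> mem1 w -> mem1 (mix a u w).
Proof.
move=> /andP[? ?] hu hw o; rewrite /mix.
by have /andP[? ?] := hu o; have /andP[? ?] := hw o; apply/andP; split; nra.
Qed.

Lemma agreeable_mix (R : realType) (a : R) u w :
  agreeable u -> agreeable w -> agreeable (mix a u w).
Proof. by rewrite /agreeable /mix => -> ->; ring. Qed.

Section MixturesWithRepeat.
Variables (R : realType) (a : R) (x0 : R) (ys : seq outcome -> R) (v : outcome -> R).
Hypotheses (ha : 0 < a <= 1) (hx0 : 0 <= x0 <= 1) (hys : ystrat ys).

Let a01 : 0 <= a <= 1. Proof. by case/andP: ha => /ltW ->. Qed.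
Let in01_0 : 0 <= (0 : R) <= 1. Proof. by rewrite lexx ler01. Qed.
Let in01_1 : 0 <= (1 : R) <= 1. Proof. by rewrite lexx ler01. Qed.

Lemma mem1_mix_TFT_Repeat : mem1 (mix a (TFT R) (Repeat R)).
Proof. by apply: mem1_mix => //; apply: mem1_vec4. Qed.

Lemma mem1_mix_Grim_Repeat : mem1 (mix a (Grim R) (Repeat R)).
Proof. by apply: mem1_mix => //; apply: mem1_vec4. Qed.

Lemma limit_dist_mix_TFT_Repeat : limit_dist (mix a (TFT R) (Repeat R)) x0 ys v ->
  v (true, false) = v (false, true).
Proof.
move=> hv; have := Akin hv mem1_mix_TFT_Repeat hx0 hys.
by case/andP: ha => ? _; rewrite big_outcome /mix /TFT /Repeat /= => ?; nra.
Qed.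

Lemma limit_dist_mix_Grim_Repeat : limit_dist (mix a (Grim R) (Repeat R)) x0 ys v ->
  v (true, false) = 0.
Proof.
move=> hv; have := Akin hv mem1_mix_Grim_Repeat hx0 hys.
by case/andP: ha => ? _; rewrite big_outcome /mix /Grim /Repeat /= => ?; nra.
Qed.

End MixturesWithRepeat.

Section Payoffs.
Variables (R : realType) (pT pR pP pS : R) (v : outcome -> R).
Hypotheses (hPD : PD pT pR pP pS) (v_ge0 : forall o, 0 <= v o) (v_sum : \sum_o v o = 1).

Lemma payoff_sym : v (true, false) = v (false, true) ->
  payoff (SY pT pR pP pS) v = payoff (SX pT pR pP pS) v.
Proof. by rewrite /payoff !big_outcome /= => ->; ring. Qed.

Lemma payoffSY_le_sym : v (true, false) = v (false, true) -> payoff (SY pT pR pP pS) v <= pR.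
Proof.
move: v_sum hPD (v_ge0 (false, true)) (v_ge0 (false, false)).
rewrite /payoff !big_outcome /= => + [? ? ? ?] ? ? vsym; rewrite vsym => ?; nra.
Qed.

Lemma payoffs_no_cd : v (true, false) = 0 -> pR <= payoff (SY pT pR pP pS) v ->
  payoff (SY pT pR pP pS) v = pR /\ payoff (SX pT pR pP pS) v = pR.
Proof.
have [TR RP PS _] := hPD; have vdc_ge0 := v_ge0 (false, true); have vdd_ge0 := v_ge0 (false, false).
move: v_sum; rewrite /payoff !big_outcome /= => sum1 vcd; rewrite vcd => SY_ge.
have loss : (pR - pS) * v (false, true) + (pR - pP) * v (false, false) <= 0 by nra.
have ? : 0 <= (pR - pS) * v (false, true) by rewrite mulr_ge0 // subr_ge0; lra.
have ? : 0 <= (pR - pP) * v (false, false) by rewrite mulr_ge0 // subr_ge0; lra.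
have /eqP : (pR - pS) * v (false, true) = 0 by lra.
have /eqP : (pR - pP) * v (false, false) = 0 by lra.
rewrite !mulf_eq0 !subr_eq0 => /orP[/eqP|/eqP vdd]; first lra.
move=> /orP[/eqP|/eqP vdc]; first lra.
have vcc : v (true, true) = 1 by lra.
by rewrite vcc vdc vdd; split; ring.
Qed.

End Payoffs.

Theorem corollary1p4 (R : realType) (pT pR pP pS : R) (a : R) :
  PD pT pR pP pS -> 0 < a <= 1 ->
  (good pT pR pP pS (mix a (@TFT R) (@Repeat R)) /\
   forall (x0 : R) (ys : seq outcome -> R) (v : outcome -> R),
     0 <= x0 <= 1 -> ystrat ys ->
     limit_dist (mix a (@TFT R) (@Repeat R)) x0 ys v ->
     payoff (SY pT pR pP pS) v = payoff (SX pT pR pP pS) v) /\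
  good pT pR pP pS (mix a (@Grim R) (@Repeat R)).
Proof.
move=> hPD ha.
split; [split; [split|] | split].
- exact: agreeable_mix.
- move=> x0 ys v hx0 hys hv SY_ge; have vsym := limit_dist_mix_TFT_Repeat ha hx0 hys hv.
  have hp := mem1_mix_TFT_Repeat ha.
  have SY_le := payoffSY_le_sym hPD (limit_dist_ge0 hv hp hx0 hys) (sum_limit_dist hv) vsym.
  have SY_eq : payoff (SY pT pR pP pS) v = pR by apply/eqP; rewrite eq_le SY_le.
  by rewrite -(payoff_sym pT pR pP pS vsym) SY_eq.
- by move=> x0 ys v hx0 hys hv; apply: payoff_sym; apply: limit_dist_mix_TFT_Repeat hv.
- exact: agreeable_mix.
- move=> x0 ys v hx0 hys hv; have hp := mem1_mix_Grim_Repeat ha.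
  apply: payoffs_no_cd (limit_dist_ge0 hv hp hx0 hys) (sum_limit_dist hv) _ => //.
  exact: limit_dist_mix_Grim_Repeat ha hx0 hys hv.
Qed.
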